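(* Let $\mathcal R$ be a reaction network and $\mathcal U\subseteq\mathcal S$. Let $r_0\in\mathcal R_{\mathcal U}'$, $m\ge1$, $r_{11},\dots,r_{1m}\in\mathcal R_{\mathcal U}$ and $r_1=\oplus_{i=1}^m r_{1i}$, and suppose $r_0\oplus r_1\notin\overline{\mathcal R}_{\mathcal U}$. Then $r_0\in\mathcal R_{\mathcal U}'\setminus\mathcal R_{\mathcal U}$ and $r_0\oplus(\oplus_{i=1}^k r_{1i})\in\overline{\mathcal R}_{\mathcal U}'\setminus\overline{\mathcal R}_{\mathcal U}$ for $k=1,\dots,m-1$. If moreover $r_0\oplus r_1\in\overline{\mathcal R}_0$, then $r_{1m}\in\mathcal R_{\mathcal U}\setminus\mathcal R_{\mathcal U}'$ and $\oplus_{i=k}^m r_{1i}\in\overline{\mathcal R}_{\mathcal U}\setminus\overline{\mathcal R}_{\mathcal U}'$ for $k=1,\dots,m$.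
   Context: Species $S_1,\dots,S_n$ are the unit vectors of $\mathbb{N}_0^n$ and $\mathcal S=\{S_1,\dots,S_n\}$; for $x\in\mathbb{N}_0^n$, $\mathrm{supp}(x)=\{S_k: x^k>0\}$. A reaction network (RN) is a (possibly infinite) subset $\mathcal R\subseteq\mathbb{N}_0^n\times\mathbb{N}_0^n$ containing no $(y,y')$ with $y=y'$; elements $(y,y')$ are reactions $y\to y'$ with reactant $y$ and product $y'$. For $r_1=(y_1,y_1'),\ r_2=(y_2,y_2')$ define $r_1\oplus r_2=(y_1+0\vee(y_2-y_1'),\ y_2'+0\vee(y_1'-y_2))$ ($\vee$ componentwise maximum); it is associative. $\mathrm{cl}(A)$ is the set of all finite $\oplus$-sums of elements of $A$, including $(0,0)$. For $\mathcal U\subseteq\mathcal S$ and a set $B\subseteq\mathbb{N}_0^n\times\mathbb{N}_0^n$ write $B_{\mathcal U}=\{(y,y')\in B:\mathrm{supp}(y)\cap\mathcal U\neq\emptyset\}$ and $B_{\mathcal U}'=\{(y,y')\in B:\mathrm{supp}(y')\cap\mathcal U\neq\emptyset\}$. Set $\overline{\mathcal R}=\mathrm{cl}(\mathcal R)$, $\mathcal R_0=\mathcal R\setminus(\mathcal R_{\mathcal U}\cup\mathcal R_{\mathcal U}')$ and $\overline{\mathcal R}_0=\overline{\mathcal R}\setminus(\overline{\mathcal R}_{\mathcal U}\cup\overline{\mathcal R}_{\mathcal U}')$. *)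

From mathcomp Require Import all_boot.
Set Implicit Arguments. Unset Strict Implicit. Unset Printing Implicit Defensive.

(* Complexes: vectors of N_0^n, indexed by species 'I_n. *)
Definition cplx (n : nat) := {ffun 'I_n -> nat}.
(* A reaction y -> y' is the pair (y, y'). *)
Definition reaction (n : nat) := (cplx n * cplx n)%type.

Definition vadd n (x y : cplx n) : cplx n := [ffun i => x i + y i].
(* componentwise 0 \/ (x - y), i.e. truncated subtraction on nat *)
Definition vposdiff n (x y : cplx n) : cplx n := [ffun i => x i - y i].
Definition vzero n : cplx n := [ffun => 0].

Definition oplus n (r1 r2 : reaction n) : reaction n :=
  (vadd r1.1 (vposdiff r2.1 r1.2), vadd r2.2 (vposdiff r1.2 r2.1)).

Definition rzero n : reaction n := (vzero n, vzero n).

Definition oplus_seq n (s : seq (reaction n)) : reaction n :=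
  foldr (@oplus n) (rzero n) s.

(* oplus_{i=a}^b rs i  =  rs a (+) rs (a+1) (+) ... (+) rs b *)
Definition oplus_range n (rs : nat -> reaction n) (a b : nat) : reaction n :=
  oplus_seq [seq rs i | i <- iota a (b.+1 - a)].

Definition is_RN n (R : reaction n -> Prop) : Prop :=
  forall r, R r -> r.1 <> r.2.

Definition cl n (A : reaction n -> Prop) : reaction n -> Prop :=
  fun r => exists s : seq (reaction n), (forall x, x \in s -> A x) /\ r = oplus_seq s.

Definition supp_meets n (U : {set 'I_n}) (x : cplx n) : Prop :=
  exists i, i \in U /\ 0 < x i.

Definition sub_U n (U : {set 'I_n}) (B : reaction n -> Prop) : reaction n -> Prop :=
  fun r => B r /\ supp_meets U r.1.
Definition sub_U' n (U : {set 'I_n}) (B : reaction n -> Prop) : reaction n -> Prop :=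
  fun r => B r /\ supp_meets U r.2.
Definition sub_0 n (U : {set 'I_n}) (B : reaction n -> Prop) : reaction n -> Prop :=
  fun r => B r /\ ~ sub_U U B r /\ ~ sub_U' U B r.

From mathcomp Require Import all_boot.
From mathcomp Require Import zify.

(* Proof of Lemma 4.5.
   The composition r (+) s of two reactions only adds to the reactant of r
   and to the product of s; and a species in the reactant of s can disappear
   from the reactant of r (+) s only if r produces it.  Write
   P_k = r0 (+) r_11 (+) ... (+) r_1k  and  S_k = r_1k (+) ... (+) r_1m.
   Since P_m = P_k (+) (r_1(k+1) (+) ... (+) r_1m), the hypothesis that the
   reactant of P_m avoids U propagates to every P_k; since r_1(k+1) consumes
   some species of U while P_(k+1) = P_k (+) r_1(k+1) does not, P_k must
   produce a species of U (this covers r0 = P_0 as well).  Dually, each S_k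
   consumes a species of U because r_1k does, and since
   P_m = P_(k-1) (+) S_k, the product of S_k avoids U when that of P_m does. *)

Section OplusAlgebra.
Variable n : nat.
Implicit Types r s t : reaction n.

Lemma oplus_reactantE r s i : (oplus r s).1 i = r.1 i + (s.1 i - r.2 i).
Proof. by rewrite /oplus /= !ffunE. Qed.

Lemma oplus_productE r s i : (oplus r s).2 i = s.2 i + (r.2 i - s.1 i).
Proof. by rewrite /oplus /= !ffunE. Qed.

Lemma oplusA r s t : oplus (oplus r s) t = oplus r (oplus s t).
Proof.
rewrite /oplus; congr pair; apply/ffunP => i; rewrite !ffunE /=; lia.
Qed.

Lemma oplus0r r : oplus (rzero n) r = r.
Proof.
case: r => a a'; rewrite /oplus /=; congr pair; apply/ffunP => i;
  rewrite !ffunE /=; lia.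
Qed.

Lemma oplusr0 r : oplus r (rzero n) = r.
Proof.
case: r => a a'; rewrite /oplus /=; congr pair; apply/ffunP => i;
  rewrite !ffunE /=; lia.
Qed.

Lemma oplus_seq_cat (s1 s2 : seq (reaction n)) :
  oplus_seq (s1 ++ s2) = oplus (oplus_seq s1) (oplus_seq s2).
Proof.
by elim: s1 => [|x s IH] /=; [rewrite oplus0r | rewrite IH oplusA].
Qed.

Lemma oplus_reactant_ge r s i : r.1 i <= (oplus r s).1 i.
Proof. by rewrite oplus_reactantE leq_addr. Qed.

Lemma oplus_product_ge r s i : s.2 i <= (oplus r s).2 i.
Proof. by rewrite oplus_productE leq_addr. Qed.

End OplusAlgebra.

Section Closure.
Variables (n : nat) (R : reaction n -> Prop).

Lemma cl_oplus r s : cl R r -> cl R s -> cl R (oplus r s).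
Proof.
move=> [s1 [H1 ->]] [s2 [H2 ->]]; exists (s1 ++ s2).
split; last by rewrite oplus_seq_cat.
by move=> x; rewrite mem_cat => /orP [/H1|/H2].
Qed.

Lemma cl_of_mem r : R r -> cl R r.
Proof.
move=> Rr; exists [:: r]; split; last by rewrite /= oplusr0.
by move=> x; rewrite inE => /eqP ->.
Qed.

Lemma cl_oplus_range (rs : nat -> reaction n) a b :
  (forall i, a <= i <= b -> R (rs i)) -> cl R (oplus_range rs a b).
Proof.
move=> Hrs; exists [seq rs i | i <- iota a (b.+1 - a)]; split => //.
by move=> x /mapP [i]; rewrite mem_iota => Hi ->; apply: Hrs; lia.
Qed.

End Closure.

Section Ranges.
Variables (n : nat) (rs : nat -> reaction n).

Lemma oplus_range_split a b c : a <= b.+1 -> b <= c ->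
  oplus_range rs a c = oplus (oplus_range rs a b) (oplus_range rs b.+1 c).
Proof.
move=> Hab Hbc; rewrite /oplus_range -oplus_seq_cat -map_cat.
have -> : c.+1 - a = (b.+1 - a) + (c.+1 - b.+1) by lia.
by rewrite iotaD; have -> : a + (b.+1 - a) = b.+1 by lia.
Qed.

Lemma oplus_range0 k : oplus_range rs k.+1 k = rzero n.
Proof. by rewrite /oplus_range subnn. Qed.

Lemma oplus_range1 k : oplus_range rs k k = rs k.
Proof. by rewrite /oplus_range subSnn /= oplusr0. Qed.

Lemma oplus_range_cons k m : k <= m ->
  oplus_range rs k m = oplus (rs k) (oplus_range rs k.+1 m).
Proof. by move=> Hkm; rewrite (@oplus_range_split k k m) // oplus_range1. Qed.

Lemma oplus_range_splitl r a b c : a <= b.+1 -> b <= c ->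
  oplus r (oplus_range rs a c) =
  oplus (oplus r (oplus_range rs a b)) (oplus_range rs b.+1 c).
Proof. by move=> Hab Hbc; rewrite oplusA -oplus_range_split. Qed.

End Ranges.

Section Support.
Variables (n : nat) (U : {set 'I_n}).
Implicit Types r s : reaction n.

Lemma meets_mono (x y : cplx n) :
  supp_meets U x -> (forall i, x i <= y i) -> supp_meets U y.
Proof. by move=> [i [Ui xi]] Hxy; exists i; split=> //; exact: leq_trans xi _. Qed.

Lemma meets_reactant_oplus r s :
  supp_meets U r.1 -> supp_meets U (oplus r s).1.
Proof. by move=> Hr; apply: meets_mono Hr _; exact: oplus_reactant_ge. Qed.

Lemma meets_product_oplus r s :
  supp_meets U s.2 -> supp_meets U (oplus r s).2.
Proof. by move=> Hs; apply: meets_mono Hs _; exact: oplus_product_ge. Qed.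

(* If s consumes a species of U but r (+) s does not, then r produces a
   species of U: the consumption of s must be covered by the product of r. *)
Lemma meets_product_of_cancelled r s :
  supp_meets U s.1 -> ~ supp_meets U (oplus r s).1 -> supp_meets U r.2.
Proof.
move=> [i [Ui s1i]] Hnot; exists i; split=> //; rewrite lt0n; apply/negP.
move=> /eqP r2i; apply: Hnot; exists i; split=> //.
by rewrite oplus_reactantE r2i subn0 ltn_addl.
Qed.

End Support.

Section ChainOfReactions.
Variables (n : nat) (U : {set 'I_n}) (r0 : reaction n) (m : nat)
  (r1 : nat -> reaction n).
Hypothesis consumes : forall i, 1 <= i <= m -> supp_meets U (r1 i).1.

Let prefix k := oplus r0 (oplus_range r1 1 k).

Lemma prefixes_produce_U :
  ~ supp_meets U (prefix m).1 ->
  forall k, k < m -> supp_meets U (prefix k).2 /\ ~ supp_meets U (prefix k).1.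
Proof.
move=> Pm_avoids.
have avoid k : k <= m -> ~ supp_meets U (prefix k).1.
  move=> Hk Hmeets; apply: Pm_avoids; rewrite /prefix (@oplus_range_splitl _ _ _ 1 k m) //.
  exact: meets_reactant_oplus.
move=> k Hk; split; last exact/avoid/ltnW.
apply: (@meets_product_of_cancelled _ _ _ (r1 k.+1)); first by apply: consumes; lia.
have -> : oplus (prefix k) (r1 k.+1) = prefix k.+1.
  by rewrite /prefix (@oplus_range_splitl _ _ _ 1 k k.+1) // oplus_range1.
exact: avoid.
Qed.

Lemma suffixes_consume_U :
  ~ supp_meets U (prefix m).2 ->
  forall k, 1 <= k <= m ->
    supp_meets U (oplus_range r1 k m).1 /\ ~ supp_meets U (oplus_range r1 k m).2.
Proof.
move=> Pm_avoids k Hk; split.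
  by rewrite oplus_range_cons; [apply/meets_reactant_oplus/consumes | lia].
move=> Hmeets; apply: Pm_avoids.
rewrite /prefix (@oplus_range_splitl _ _ _ 1 k.-1 m); [|lia|lia].
by rewrite prednK; [exact: meets_product_oplus | lia].
Qed.

End ChainOfReactions.

Theorem lemma4p5 (n : nat) (R : reaction n -> Prop) (U : {set 'I_n})
    (r0 : reaction n) (m : nat) (r1 : nat -> reaction n) :
  is_RN R ->
  sub_U' U R r0 ->
  1 <= m ->
  (forall i, 1 <= i <= m -> sub_U U R (r1 i)) ->
  ~ sub_U U (cl R) (oplus r0 (oplus_range r1 1 m)) ->
  ((sub_U' U R r0 /\ ~ sub_U U R r0) /\
   (forall k, 1 <= k <= m.-1 ->
      sub_U' U (cl R) (oplus r0 (oplus_range r1 1 k)) /\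
      ~ sub_U U (cl R) (oplus r0 (oplus_range r1 1 k)))) /\
  (sub_0 U (cl R) (oplus r0 (oplus_range r1 1 m)) ->
   (sub_U U R (r1 m) /\ ~ sub_U' U R (r1 m)) /\
   (forall k, 1 <= k <= m ->
      sub_U U (cl R) (oplus_range r1 k m) /\
      ~ sub_U' U (cl R) (oplus_range r1 k m))).
Proof.
move=> _ [Rr0 r0U'] Hm Hr1 HnotU.
have consumes i : 1 <= i <= m -> supp_meets U (r1 i).1 by move/Hr1 => [].
have cl_range a b : 1 <= a -> b <= m -> cl R (oplus_range r1 a b).
  by move=> Ha Hb; apply: cl_oplus_range => i Hi; case: (Hr1 i) => //; lia.
have cl_prefix k : k <= m -> cl R (oplus r0 (oplus_range r1 1 k)).
  by move=> Hk; apply/cl_oplus/cl_range => //; exact: cl_of_mem.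
have Hprefix := @prefixes_produce_U n U r0 m r1 consumes
  (fun H => HnotU (conj (cl_prefix m (leqnn m)) H)).
split; [split|].
- split=> // [[_ r0U]]; have [_ []] := Hprefix 0 Hm.
  by rewrite oplus_range0 oplusr0.
- move=> k Hk; have [produces avoids] := Hprefix k ltac:(lia).
  by split; [split=> //; apply: cl_prefix; lia | move=> [_ /avoids]].
- move=> [_ [_ HnotU']].
  have Hsuffix := @suffixes_consume_U n U r0 m r1 consumes
    (fun H => HnotU' (conj (cl_prefix m (leqnn m)) H)).
  have suffix_cl k : 1 <= k <= m ->
      sub_U U (cl R) (oplus_range r1 k m) /\ ~ sub_U' U (cl R) (oplus_range r1 k m).
    move=> Hk; have [consumesU avoids] := Hsuffix k Hk.
    by split; [split=> //; apply: cl_range; lia | move=> [_ /avoids]].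
  split=> //; split; first exact/Hr1/andP.
  move=> [_ r1mU']; have [_] := suffix_cl m ltac:(lia); apply; split.
    exact: cl_range.
  by rewrite oplus_range1.
Qed.
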